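(* Let $R$ be a valuation domain, $J/A$ a type with $J=\bigcup_{\nu<\omega_1} r_\nu^{-1}R$ as in the context, and let $\delta<\omega_1$ be a limit ordinal such that $R/\bigcap_{\nu<\delta} r_\nu A$ is not complete. Suppose $\{e^\tau_\sigma:\sigma<\tau<\delta\}\subseteq R^*$ satisfies $e^\rho_\tau e^\tau_\sigma-e^\rho_\sigma\in r_\sigma A$ for all $\sigma<\tau<\rho<\delta$. Then there are units $e^\delta_{\sigma,j}\in R^*$ ($\sigma<\delta$, $j\in\{0,1\}$) such that $e^\delta_{\tau,j}e^\tau_\sigma-e^\delta_{\sigma,j}\in r_\sigma A$ for all $\sigma<\tau<\delta$ and $j\in\{0,1\}$, but there is no family of units $\{c_\sigma:\sigma<\delta\}$ together with units $c_{\delta,0},c_{\delta,1}\in R^*$ such that $c_\tau-e^\tau_\sigma c_\sigma\in r_\sigma A$ for all $\sigma<\tau<\delta$ and $c_{\delta,j}-e^\delta_{\sigma,j}c_\sigma\in r_\sigma A$ for all $\sigma<\delta$ and $j\in\{0,1\}$.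
   Context: $R$ is a valuation domain with quotient field $Q\neq R$ and unit group $R^*$. $A\subseteq J$ are $R$-submodules of $Q$ with $J=\bigcup_{\nu<\omega_1} r_\nu^{-1}R$, $r_\nu\in R\setminus\{0\}$, $r_\mu\mid r_\nu$ for $\mu<\nu$. $R/\bigcap_{\nu<\delta} r_\nu A$ carries the linear topology with basic neighborhoods of $0$ the images of $r_\nu A$ ($\nu<\delta$); complete means every Cauchy sequence converges. *)

From HB Require Import structures.
From mathcomp Require Import all_boot all_order all_algebra fraction.
Set Implicit Arguments. Unset Strict Implicit. Unset Printing Implicit Defensive.
Import Order.TTheory GRing.Theory Num.Theory.
Local Open Scope ring_scope.

Definition emb (R : idomainType) (x : R) : {fraction R} := @FracField.tofrac R x.

Definition dvdR (R : idomainType) (a b : R) : Prop := exists c : R, b = c * a.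

Definition valuation_domain (R : idomainType) : Prop :=
  forall a b : R, dvdR a b \/ dvdR b a.

Definition is_Rsubmodule (R : idomainType) (M : {fraction R} -> Prop) : Prop :=
  M 0 /\ (forall x y, M x -> M y -> M (x + y)) /\
  (forall (r : R) x, M x -> M (emb r * x)).

Definition smul (R : idomainType) (r : R) (M : {fraction R} -> Prop)
  : {fraction R} -> Prop :=
  fun x => exists a, M a /\ x = emb r * a.

(* (O, lt) is a well-order of order type omega_1: a strict total
   well-founded order, every initial segment is countable, and O itself is
   uncountable. Any two such orders are isomorphic to omega_1. *)
Definition omega1_order (O : Type) (lt : O -> O -> Prop) : Prop :=
  (forall x, ~ lt x x) /\
  (forall x y z, lt x y -> lt y z -> lt x z) /\
  (forall x y, lt x y \/ x = y \/ lt y x) /\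
  well_founded lt /\
  (forall a : O, exists f : {x : O | lt x a} -> nat, forall u v, f u = f v -> u = v) /\
  ~ (exists f : O -> nat, forall u v, f u = f v -> u = v).

Definition limit_ord (O : Type) (lt : O -> O -> Prop) (d : O) : Prop :=
  (exists s, lt s d) /\ (forall s, lt s d -> exists t, lt s t /\ lt t d).

(* Completeness of R / (bigcap_{nu<delta} r_nu A) in the linear topology whose
   basic neighbourhoods of 0 are the images of r_nu A (nu < delta), phrased on
   representatives in R. *)
Definition cauchy_seq (R : idomainType) (O : Type) (lt : O -> O -> Prop)
  (d : O) (r : O -> R) (A : {fraction R} -> Prop) (x : nat -> R) : Prop :=
  forall nu, lt nu d -> exists N : nat, forall n m : nat, (N <= n)%N -> (N <= m)%N ->
    smul (r nu) A (emb (x n - x m)).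

Definition converges_to (R : idomainType) (O : Type) (lt : O -> O -> Prop)
  (d : O) (r : O -> R) (A : {fraction R} -> Prop) (x : nat -> R) (l : R) : Prop :=
  forall nu, lt nu d -> exists N : nat, forall n : nat, (N <= n)%N ->
    smul (r nu) A (emb (x n - l)).

Definition complete_quot (R : idomainType) (O : Type) (lt : O -> O -> Prop)
  (d : O) (r : O -> R) (A : {fraction R} -> Prop) : Prop :=
  forall x : nat -> R, cauchy_seq lt d r A x -> exists l : R, converges_to lt d r A x l.

From HB Require Import structures.
From mathcomp Require Import all_boot all_order all_algebra fraction ring.
From Stdlib Require Import Classical ClassicalEpsilon.
Import GRing.Theory.
Set Implicit Arguments. Unset Strict Implicit.
Local Open Scope ring_scope.

(* Multiplying the representatives of [e] by suitable units along a cofinal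
   omega-sequence below [delta] makes them coherent, which extends [e] to
   [delta].  Non-completeness gives a Cauchy sequence without limit; shifted
   into the units it becomes a coherent family [u] of units with no limit in
   [R].  Extending once by [ed0] and once by [ed0 * u] gives two extensions
   that admit no common lift, since from a lift [c] the quotient
   [c_{delta,1} / c_{delta,0}] would be a limit of [u]. *)

Definition in_smul (R : idomainType) (r : R) (A : {fraction R} -> Prop) (x : R)
  : Prop := smul r A (emb x).

Section Multiples.
Variables (R : idomainType) (A : {fraction R} -> Prop).
Hypothesis hA : is_Rsubmodule A.

Lemma in_smul0 r : in_smul r A 0.
Proof. case: hA => A0 _; exists 0; split => //; by rewrite /emb rmorph0 mulr0. Qed.

Lemma in_smulD r x y : in_smul r A x -> in_smul r A y -> in_smul r A (x + y).
Proof.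
case: hA => _ [AD _] [a [Aa Ha]] [b [Ab Hb]]; exists (a + b); split; first exact: AD.
have -> : emb (x + y) = emb x + emb y by rewrite /emb rmorphD.
by rewrite Ha Hb mulrDr.
Qed.

Lemma in_smulMl r c x : in_smul r A x -> in_smul r A (c * x).
Proof.
case: hA => _ [_ AM] [a [Aa Ha]]; exists (emb c * a); split; first exact: AM.
have -> : emb (c * x) = emb c * emb x by rewrite /emb rmorphM.
by rewrite Ha mulrCA.
Qed.

Lemma in_smulN r x : in_smul r A x -> in_smul r A (- x).
Proof. by rewrite -mulN1r; apply: in_smulMl. Qed.

Lemma in_smulB r x y : in_smul r A x -> in_smul r A y -> in_smul r A (x - y).
Proof. by move=> hx hy; apply: in_smulD => //; apply: in_smulN. Qed.

Lemma in_smul_dvd r1 r2 x : dvdR r1 r2 -> in_smul r2 A x -> in_smul r1 A x.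
Proof.
case: hA => _ [_ AM] [c ->] [a [Aa Ha]]; exists (emb c * a); split; first exact: AM.
by rewrite Ha /emb rmorphM -mulrA mulrCA.
Qed.

Lemma in_smul_nonunit r x : ~ in_smul r A 1 -> in_smul r A x -> x \isn't a GRing.unit.
Proof.
by move=> n1 hx; apply/negP => xU; apply: n1; rewrite -(mulVr xU); apply: in_smulMl.
Qed.

End Multiples.

Section ValuationDomain.
Variable R : idomainType.
Hypothesis V : valuation_domain R.

Lemma nonunitD (a b : R) :
  a \isn't a GRing.unit -> b \isn't a GRing.unit -> a + b \isn't a GRing.unit.
Proof.
move=> ha hb; case: (V a b) => [[c ->]|[c ->]].
- by rewrite -{1}[a]mul1r -mulrDl unitrM negb_and ha orbT.
- by rewrite -{2}[b]mul1r -mulrDl unitrM negb_and hb orbT.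
Qed.

Lemma unit_of_nonunit_diff (y z : R) :
  y \is a GRing.unit -> z - y \isn't a GRing.unit -> z \is a GRing.unit.
Proof.
move=> yU hzy; apply/negPn/negP => hz.
have := nonunitD hz (b := - (z - y)); rewrite unitrN => /(_ hzy).
by rewrite opprB addrC subrK yU.
Qed.

Lemma unit_or_add1_unit (y : R) : y \is a GRing.unit \/ 1 + y \is a GRing.unit.
Proof.
case yU: (y \is a GRing.unit); [by left | right].
by apply: (unit_of_nonunit_diff (unitr1 R)); rewrite addrC addKr yU.
Qed.

End ValuationDomain.

Section CofinalSequence.
Variables (O : Type) (lt : O -> O -> Prop) (d : O).
Hypothesis lt_transitive : forall x y z, lt x y -> lt y z -> lt x z.
Hypothesis lt_trichotomy : forall x y, lt x y \/ x = y \/ lt y x.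
Hypothesis below_countable :
  exists f : {x | lt x d} -> nat, forall u v, f u = f v -> u = v.
Hypothesis d_limit : limit_ord lt d.

Lemma limit_common_ub p x : lt p d -> lt x d -> exists t, lt p t /\ lt x t /\ lt t d.
Proof.
move=> pd xd; have [m [md [pm xm]]] :
    exists m, lt m d /\ (p = m \/ lt p m) /\ (x = m \/ lt x m).
  by case: (lt_trichotomy p x) => [h|[->|h]]; [exists x | exists x | exists p]; auto.
have [t [mt td]] := proj2 d_limit m md.
have below_t z : z = m \/ lt z m -> lt z t by case=> [->//|/lt_transitive]; apply.
by exists t; split; [apply: below_t | split; first apply: below_t].
Qed.

Lemma enum_below :
  exists g : nat -> O, (forall n, lt (g n) d) /\ (forall s, lt s d -> exists n, g n = s).
Proof.
have [f f_inj] := below_countable; have [s0 s0d] := proj1 d_limit.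
have [g hg] : exists g : nat -> O, forall n, lt (g n) d /\
    forall x (xd : lt x d), f (exist _ x xd) = n -> x = g n.
  apply: (choice (fun n y => lt y d /\ forall x xd, f (exist _ x xd) = n -> x = y)).
  move=> n; case: (classic (exists x (xd : lt x d), f (exist _ x xd) = n)).
  - move=> [x [xd fx]]; exists x; split => // y yd fy.
    by have [] := f_inj (exist _ y yd) (exist _ x xd) (etrans fy (esym fx)).
  - by move=> hn; exists s0; split => // x xd fx; case: hn; exists x, xd.
exists g; split => [n|s sd]; first by case: (hg n).
by exists (f (exist _ s sd)); symmetry; apply: (proj2 (hg _)).
Qed.

Lemma cofinal_seq : exists rho : nat -> O,
  (forall n, lt (rho n) d) /\ (forall n, lt (rho n) (rho n.+1)) /\
  (forall s, lt s d -> exists n, lt s (rho n)).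
Proof.
have [g [gd g_onto]] := enum_below.
have [ub hub] : exists ub : O * O -> O, forall px, lt px.1 d -> lt px.2 d ->
    lt px.1 (ub px) /\ lt px.2 (ub px) /\ lt (ub px) d.
  apply: (choice (fun px t => lt px.1 d -> lt px.2 d -> lt px.1 t /\ lt px.2 t /\ lt t d)).
  move=> [p x].
  case: (classic (lt p d /\ lt x d)) => [[pd xd]|h].
  - by have [t ht] := limit_common_ub pd xd; exists t.
  - by exists p => pd xd; case: h.
pose rho := fix rho n := if n is m.+1 then ub (rho m, g m) else g 0%N.
have rho_d : forall n, lt (rho n) d.
  by elim=> [|n IH] //=; case: (hub (rho n, g n) IH (gd n)) => _ [].
exists rho; split => //; split => [n|s sd]; first by case: (hub (rho n, g n) (rho_d n) (gd n)).
have [n <-] := g_onto s sd; exists n.+1.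
by case: (hub (rho n, g n) (rho_d n) (gd n)) => _ [].
Qed.

End CofinalSequence.

Section ExtensionToLimit.
Variables (R : idomainType) (O : Type) (lt : O -> O -> Prop).
Variables (A : {fraction R} -> Prop) (r : O -> R) (d : O) (e : O -> O -> R).
Variable rho : nat -> O.
Hypothesis hA : is_Rsubmodule A.
Hypothesis lt_transitive : forall x y z, lt x y -> lt y z -> lt x z.
Hypothesis r_dvd : forall mu nu, lt mu nu -> dvdR (r mu) (r nu).
Hypothesis e_unit : forall s t, lt s t -> lt t d -> e t s \is a GRing.unit.
Hypothesis e_coherent : forall s t p, lt s t -> lt t p -> lt p d ->
  in_smul (r s) A (e p t * e t s - e p s).
Hypothesis rho_lt_d : forall n, lt (rho n) d.
Hypothesis rho_incr : forall n, lt (rho n) (rho n.+1).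
Hypothesis rho_cofinal : forall s, lt s d -> exists n, lt s (rho n).

Lemma rho_mono s n m : (n <= m)%N -> lt s (rho n) -> lt s (rho m).
Proof.
move=> nm sn; rewrite -(subnKC nm); elim: (m - n)%N => [|k IH]; first by rewrite addn0.
by rewrite addnS; apply: lt_transitive IH (rho_incr _).
Qed.

Fixpoint rho_scale n : R :=
  if n is m.+1 then rho_scale m * (e (rho m.+1) (rho m))^-1 else 1.

Lemma rho_scale_unit n : rho_scale n \is a GRing.unit.
Proof. by elim: n => [|n IH] /=; rewrite ?unitr1 // unitrM IH unitrV e_unit. Qed.

Lemma rho_scale_coherent s n m : (n <= m)%N -> lt s (rho n) ->
  in_smul (r s) A (rho_scale m * e (rho m) s - rho_scale n * e (rho n) s).
Proof.
move=> nm sn; rewrite -(subnKC nm); elim: (m - n)%N => [|k IH].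
  by rewrite addn0 subrr; apply: in_smul0.
rewrite addnS; set j := (n + k)%N in IH *.
have sj : lt s (rho j) by apply: rho_mono sn; apply: leq_addr.
have scale_step : rho_scale j.+1 * e (rho j.+1) (rho j) = rho_scale j.
  by rewrite /= -mulrA mulVr ?mulr1 // e_unit.
have -> : rho_scale j.+1 * e (rho j.+1) s - rho_scale n * e (rho n) s =
    - rho_scale j.+1 * (e (rho j.+1) (rho j) * e (rho j) s - e (rho j.+1) s)
    + (rho_scale j.+1 * e (rho j.+1) (rho j) * e (rho j) s
       - rho_scale n * e (rho n) s) by ring.
rewrite scale_step; apply: in_smulD => //.
by apply: in_smulMl => //; apply: e_coherent.
Qed.

Lemma extension_to_limit : exists ed0 : O -> R,
  (forall s, lt s d -> ed0 s \is a GRing.unit) /\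
  (forall s t, lt s t -> lt t d -> in_smul (r s) A (ed0 t * e t s - ed0 s)).
Proof.
have [idx hidx] : exists idx : O -> nat, forall s, lt s d -> lt s (rho (idx s)).
  apply: (choice (fun s n => lt s d -> lt s (rho n))) => s.
  case: (classic (lt s d)) => [sd|hs]; last by exists 0%N.
  by have [n hn] := rho_cofinal sd; exists n.
exists (fun s => rho_scale (idx s) * e (rho (idx s)) s); split.
  by move=> s sd; rewrite unitrM rho_scale_unit e_unit //; apply: hidx.
move=> s t st td; have sd := lt_transitive st td.
set n := idx t; set k := idx s; set m := maxn n k.
have -> : rho_scale n * e (rho n) t * e t s - rho_scale k * e (rho k) s =
    - (rho_scale m * e (rho m) t - rho_scale n * e (rho n) t) * e t s
    + rho_scale m * (e (rho m) t * e t s - e (rho m) s)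
    + (rho_scale m * e (rho m) s - rho_scale k * e (rho k) s) by ring.
have tm : lt t (rho m) by apply: rho_mono (hidx _ td); apply: leq_maxl.
apply: in_smulD => //; [apply: in_smulD => //|].
- rewrite mulrC; apply: in_smulMl => //; apply: in_smulN => //.
  apply: in_smul_dvd (r_dvd st) _ => //.
  by apply: rho_scale_coherent (hidx _ td); apply: leq_maxl.
- by apply: in_smulMl => //; apply: e_coherent.
- by apply: rho_scale_coherent (hidx _ sd); apply: leq_maxr.
Qed.

End ExtensionToLimit.

Section DivergentUnits.
Variables (R : idomainType) (O : Type) (lt : O -> O -> Prop).
Variables (A : {fraction R} -> Prop) (r : O -> R) (d : O).
Hypothesis V : valuation_domain R.
Hypothesis hA : is_Rsubmodule A.
Hypothesis lt_transitive : forall x y z, lt x y -> lt y z -> lt x z.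
Hypothesis r_dvd : forall mu nu, lt mu nu -> dvdR (r mu) (r nu).

Lemma cauchy_moduli (x : nat -> R) (N0 : nat) : cauchy_seq lt d r A x ->
  exists M : O -> nat, forall s, lt s d -> (N0 <= M s)%N /\
    forall n m, (M s <= n)%N -> (M s <= m)%N -> in_smul (r s) A (x n - x m).
Proof.
move=> xC; apply: (choice (fun s N => lt s d -> (N0 <= N)%N /\
  forall n m, (N <= n)%N -> (N <= m)%N -> in_smul (r s) A (x n - x m))) => s.
case: (classic (lt s d)) => [sd|hs]; last by exists 0%N.
have [N hN] := xC s sd; exists (maxn N N0) => _; split; first exact: leq_maxr.
by move=> n m hn hm; apply: hN; apply: leq_trans (leq_maxl N N0) _.
Qed.

Lemma moduli_coherent (x : nat -> R) (M : O -> nat) :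
  (forall s, lt s d ->
     forall n m, (M s <= n)%N -> (M s <= m)%N -> in_smul (r s) A (x n - x m)) ->
  forall s t, lt s t -> lt t d -> in_smul (r s) A (x (M t) - x (M s)).
Proof.
move=> hM s t st td; case: (leqP (M s) (M t)) => h.
  by apply: hM (lt_transitive st td) _ _ h _.
by apply: in_smul_dvd (r_dvd st) _ => //; apply: hM => //; apply: ltnW.
Qed.

Lemma noncomplete_unit_family : ~ complete_quot lt d r A ->
  exists u : O -> R, (forall s, lt s d -> u s \is a GRing.unit) /\
    (forall s t, lt s t -> lt t d -> in_smul (r s) A (u t - u s)) /\
    ~ (exists l, forall s, lt s d -> in_smul (r s) A (u s - l)).
Proof.
move=> incomplete.
have [x [xC x_div]] : exists x, cauchy_seq lt d r A x /\
    ~ exists l, converges_to lt d r A x l.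
  apply: NNPP => H; apply: incomplete => x xC; apply: NNPP => H2; apply: H; by exists x.
(* If [1] lay in every [r_s A], every sequence would converge to [0]. *)
have [nu0 [nu0d not1]] : exists nu0, lt nu0 d /\ ~ in_smul (r nu0) A 1.
  apply: NNPP => H; apply: x_div; exists 0 => nu nud; exists 0%N => n _.
  rewrite subr0 -[x n]mulr1; apply: in_smulMl => //.
  by apply: NNPP => h; apply: H; exists nu.
have [N0 hN0] := xC nu0 nu0d.
have [k kU] : exists k, x N0 + k \is a GRing.unit.
  by case: (unit_or_add1_unit V (x N0)) => h; [exists 0; rewrite addr0 | exists 1; rewrite addrC].
have [M hM] := cauchy_moduli N0 xC.
have M_tail : forall s, lt s d ->
    forall n m, (M s <= n)%N -> (M s <= m)%N -> in_smul (r s) A (x n - x m).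
  by move=> s sd; case: (hM s sd).
(* [x (M s) - x N0] lies in [r_nu0 A], hence is a non-unit, so [x (M s) + k] is a unit. *)
exists (fun s => x (M s) + k); split; last split.
- move=> s sd; apply: (unit_of_nonunit_diff V kU); apply: in_smul_nonunit not1 _ => //.
  have -> : x (M s) + k - (x N0 + k) = x (M s) - x N0 by ring.
  by apply: hN0 => //; case: (hM s sd).
- move=> s t st td; have -> : x (M t) + k - (x (M s) + k) = x (M t) - x (M s) by ring.
  exact: (moduli_coherent M_tail st td).
- move=> [l hl]; apply: x_div; exists (l - k) => nu nud; exists (M nu) => n hn.
  have -> : x n - (l - k) = (x n - x (M nu)) + (x (M nu) + k - l) by ring.
  by apply: in_smulD => //; [apply: M_tail | apply: hl].
Qed.

End DivergentUnits.

Section TwistedExtension.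
Variables (R : idomainType) (O : Type) (lt : O -> O -> Prop).
Variables (A : {fraction R} -> Prop) (r : O -> R) (d : O) (e : O -> O -> R).
Variables (ed0 u : O -> R).
Hypothesis hA : is_Rsubmodule A.
Hypothesis ed0_unit : forall s, lt s d -> ed0 s \is a GRing.unit.
Hypothesis ed0_coherent :
  forall s t, lt s t -> lt t d -> in_smul (r s) A (ed0 t * e t s - ed0 s).
Hypothesis u_unit : forall s, lt s d -> u s \is a GRing.unit.
Hypothesis u_coherent : forall s t, lt s t -> lt t d -> in_smul (r s) A (u t - u s).
Hypothesis u_no_limit : ~ (exists l, forall s, lt s d -> in_smul (r s) A (u s - l)).

Definition twist (s : O) (j : bool) : R := if j then ed0 s * u s else ed0 s.

Lemma twist_unit s j : lt s d -> twist s j \is a GRing.unit.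
Proof. by case: j => sd /=; rewrite ?unitrM ed0_unit ?u_unit. Qed.

Lemma twist_coherent s t j : lt s t -> lt t d ->
  in_smul (r s) A (twist t j * e t s - twist s j).
Proof.
case: j => st td /=; last exact: ed0_coherent.
have -> : ed0 t * u t * e t s - ed0 s * u s =
  u t * (ed0 t * e t s - ed0 s) + ed0 s * (u t - u s) by ring.
by apply: in_smulD => //; apply: in_smulMl => //; [apply: ed0_coherent | apply: u_coherent].
Qed.

Lemma twist_not_liftable : ~ (exists (c : O -> R) (cd : bool -> R),
  (forall s, lt s d -> c s \is a GRing.unit) /\
  (forall j, cd j \is a GRing.unit) /\
  (forall s t, lt s t -> lt t d -> in_smul (r s) A (c t - e t s * c s)) /\
  (forall s j, lt s d -> in_smul (r s) A (cd j - twist s j * c s))).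
Proof.
move=> [c [cd [_ [cdU [_ hcd]]]]]; apply: u_no_limit.
exists (cd true / cd false) => s sd.
have -> : u s - cd true / cd false = - (cd false)^-1 *
    ((cd true - ed0 s * u s * c s) - u s * (cd false - ed0 s * c s)).
  rewrite [RHS](_ : _ = u s * ((cd false)^-1 * cd false) - cd true / cd false); last by ring.
  by rewrite mulVr // mulr1.
apply: in_smulMl => //; apply: in_smulB => //; first exact: (hcd s true).
by apply: in_smulMl => //; apply: (hcd s false).
Qed.

End TwistedExtension.

Theorem lemma4
  (R : idomainType) (O : Type) (lt : O -> O -> Prop)
  (A J : {fraction R} -> Prop) (r : O -> R) (d : O)
  (e : O -> O -> R) :
  valuation_domain R ->
  ~ (forall q : {fraction R}, exists a : R, q = emb a) ->
  omega1_order lt ->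
  is_Rsubmodule A -> is_Rsubmodule J ->
  (forall x, A x -> J x) ->
  (forall nu, r nu != 0) ->
  (forall mu nu, lt mu nu -> dvdR (r mu) (r nu)) ->
  (forall x, J x <-> exists nu (a : R), x = emb a / emb (r nu)) ->
  limit_ord lt d ->
  ~ complete_quot lt d r A ->
  (forall s t, lt s t -> lt t d -> e t s \is a GRing.unit) ->
  (forall s t p, lt s t -> lt t p -> lt p d ->
     smul (r s) A (emb (e p t * e t s - e p s))) ->
  exists ed : O -> bool -> R,
    (forall s j, lt s d -> ed s j \is a GRing.unit) /\
    (forall s t j, lt s t -> lt t d ->
       smul (r s) A (emb (ed t j * e t s - ed s j))) /\
    ~ (exists (c : O -> R) (cd : bool -> R),
         (forall s, lt s d -> c s \is a GRing.unit) /\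
         (forall j, cd j \is a GRing.unit) /\
         (forall s t, lt s t -> lt t d ->
            smul (r s) A (emb (c t - e t s * c s))) /\
         (forall s j, lt s d ->
            smul (r s) A (emb (cd j - ed s j * c s)))).
Proof.
move=> V _ [_ [lt_tr [lt_tot [_ [countable _]]]]] hA _ _ _ r_dvd _ d_lim
  incomplete e_unit e_coh.
have [rho [rho_d [rho_incr rho_cof]]] := cofinal_seq lt_tr lt_tot (countable d) d_lim.
have [ed0 [ed0_unit ed0_coh]] :=
  extension_to_limit hA lt_tr r_dvd e_unit e_coh rho_d rho_incr rho_cof.
have [u [u_unit [u_coh u_nolim]]] := noncomplete_unit_family V hA lt_tr r_dvd incomplete.
exists (twist ed0 u); split; first by move=> s j; apply: twist_unit.
split; first by move=> s t j; apply: twist_coherent.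
exact: twist_not_liftable.
Qed.
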